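(* Let $\alpha,\beta,\gamma\in\Bbbk^n$ and $\mathcal H=\mathcal H(\alpha,\beta,\gamma)$. If $\beta_i=0$ for some $i\in Q_0$, then $\mathcal H$ is not noetherian.
   Context: $\Bbbk$ is an algebraically closed field of characteristic zero. Fix $n\ge1$; indices mod $n$, $Q_0=\{0,\dots,n-1\}$. $Q$ is the quiver with vertices $Q_0$ and arrows $u_i:i\to i+1$, $d_i:i+1\to i$; paths are written left to right, $e_i$ is the trivial path at $i$. $\mathcal H(\alpha,\beta,\gamma)$ is $\Bbbk Q$ modulo the relations $d_{i-1}u_{i-1}u_i=\alpha_iu_id_iu_i+\beta_iu_iu_{i+1}d_{i+1}+\gamma_iu_i$ and $d_id_{i-1}u_{i-1}=\alpha_id_iu_id_i+\beta_iu_{i+1}d_{i+1}d_i+\gamma_id_i$ for all $i\in Q_0$. *)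

From HB Require Import structures.
From mathcomp Require Import all_boot all_order all_algebra.
Set Implicit Arguments. Unset Strict Implicit. Unset Printing Implicit Defensive.
Import Order.TTheory GRing.Theory Num.Theory.
Local Open Scope ring_scope.

(* Vertices Q_0 = 'I_n; i+1 and i-1 are taken mod n (ordS / ord_pred). *)

(* Elements e_i, u_i, d_i of a k-algebra B satisfy the defining relations of the
   path algebra kQ (left-to-right path composition = multiplication in B):
   e_i are orthogonal idempotents summing to 1, u_i : i -> i+1, d_i : i+1 -> i. *)
Definition quiver_rels (k : fieldType) (n : nat) (B : algType k)
    (e u d : 'I_n -> B) : Prop :=
  [/\ forall i j : 'I_n, e i * e j = (if i == j then e i else 0),
      \sum_(i < n) e i = 1,
      forall i : 'I_n, e i * u i = u i /\ u i * e (ordS i) = u i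
    & forall i : 'I_n, e (ordS i) * d i = d i /\ d i * e i = d i].

Definition H_rels (k : fieldType) (n : nat) (alpha beta gamma : 'I_n -> k)
    (B : algType k) (u d : 'I_n -> B) : Prop :=
  forall i : 'I_n,
    d (ord_pred i) * u (ord_pred i) * u i
      = alpha i *: (u i * d i * u i) + beta i *: (u i * u (ordS i) * d (ordS i))
        + gamma i *: u i
    /\ d i * d (ord_pred i) * u (ord_pred i)
      = alpha i *: (d i * u i * d i) + beta i *: (u (ordS i) * d (ordS i) * d i)
        + gamma i *: d i.

Definition is_alg_morphism (k : fieldType) (A B : algType k) (f : A -> B) : Prop :=
  [/\ forall (a : k) (x y : A), f (a *: x + y) = a *: f x + f y,
      f 1 = 1
    & forall x y : A, f (x * y) = f x * f y].

(* A, together with e, u, d, is a presentation of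
   H(alpha,beta,gamma) = kQ / (relations), i.e. A is the k-algebra generated by
   e, u, d subject exactly to the quiver relations and the relations of H:
   A is generated by them, they satisfy the relations, and (universal property)
   any k-algebra with elements satisfying the relations receives a k-algebra
   morphism from A sending generators to those elements. *)
Definition is_H_algebra (k : fieldType) (n : nat) (alpha beta gamma : 'I_n -> k)
    (A : algType k) (e u d : 'I_n -> A) : Prop :=
  [/\ quiver_rels e u d,
      H_rels alpha beta gamma u d,
      (forall S : A -> Prop,
          (forall i, S (e i)) -> (forall i, S (u i)) -> (forall i, S (d i)) ->
          S 1 -> (forall (a : k) x y, S x -> S y -> S (a *: x + y)) ->
          (forall x y, S x -> S y -> S (x * y)) ->
          forall x, S x)
    & forall (B : algType k) (e' u' d' : 'I_n -> B),
        quiver_rels e' u' d' -> H_rels alpha beta gamma u' d' ->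
        exists f : A -> B, is_alg_morphism f /\
          forall i, [/\ f (e i) = e' i, f (u i) = u' i & f (d i) = d' i]].

Definition left_ideal (R : pzRingType) (I : R -> Prop) : Prop :=
  [/\ I 0, (forall x y, I x -> I y -> I (x + y)) & forall a x, I x -> I (a * x)].

Definition right_ideal (R : pzRingType) (I : R -> Prop) : Prop :=
  [/\ I 0, (forall x y, I x -> I y -> I (x + y)) & forall a x, I x -> I (x * a)].

Definition acc_chain_stabilizes (R : Type) (P : (R -> Prop) -> Prop) : Prop :=
  forall N : nat -> R -> Prop,
    (forall m, P (N m)) -> (forall m x, N m x -> N m.+1 x) ->
    exists m0, forall m, (m0 <= m)%N -> forall x, N m x <-> N m0 x.

Definition left_noetherian (R : pzRingType) : Prop :=
  acc_chain_stabilizes (@left_ideal R).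
Definition right_noetherian (R : pzRingType) : Prop :=
  acc_chain_stabilizes (@right_ideal R).
Definition noetherian (R : pzRingType) : Prop :=
  left_noetherian R /\ right_noetherian R.

(* H acts on the right on k[X], with 'X^t sitting at the vertex
   i0 - t: u_i lowers the degree by one, d_i raises it by one with a scalar
   factor c_(t+1), and e_i projects onto the monomials sitting at i.  The
   relations of H hold as soon as the c_t satisfy a three-term recurrence, which
   leaves c_1 free.  When beta_i0 = 0 the element
   w = d_(i0-1) u_(i0-1) - alpha_i0 u_i0 d_i0 - gamma_i0 e_i0
   kills the monomials away from i0 and multiplies 'X^t at i0 by
   c_(t+1) - alpha_i0 c_t - gamma_i0 = beta_i0 c_(t-1), which is 0 for t > 0;
   choosing c_1 = gamma_i0 + 1 makes it fix 1.  So the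
   path u_(i0-j) ... u_(i0-1) e_i0 followed by w sends 'X^t to 1 if t = j and
   to 0 otherwise, and the right ideals of elements killing every 'X^t with
   t > m form a strictly increasing chain. *)

From HB Require Import structures.
From mathcomp Require Import all_boot all_order all_algebra.
From mathcomp Require Import boolp functions ring.
Import GRing.Theory.
Local Open Scope ring_scope.
Set Implicit Arguments. Unset Strict Implicit. Unset Printing Implicit Defensive.

Lemma not_right_noetherian_strict_chain (R : pzRingType) (N : nat -> R -> Prop) :
    (forall m, right_ideal (N m)) -> (forall m x, N m x -> N m.+1 x) ->
    (forall m, exists x, N m.+1 x /\ ~ N m x) ->
  ~ right_noetherian R.
Proof.
move=> idealN incrN strictN /(_ N idealN incrN) [m0 stable].
have [x [Nx notNx]] := strictN m0.
by apply/notNx/(stable m0.+1 (leqnSn m0)).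
Qed.

Section EndoAlgebra.
Variable k : fieldType.

(* An operator is given by its values on the monomials 'X^t and acts on the
   right, so that products compose left to right like paths in the quiver. *)
Definition endo := nat -> {poly k}.
HB.instance Definition _ := GRing.Lmodule.copy endo (nat -> {poly k}).
Implicit Types (S T R : endo) (p q : {poly k}).

Lemma endo_addE S T t : (S + T) t = S t + T t. Proof. by []. Qed.
Lemma endo_oppE T t : (- T) t = - T t. Proof. by []. Qed.
Lemma endo_scaleE a T t : (a *: T) t = a *: T t. Proof. by []. Qed.

Definition act T p : {poly k} := \sum_(j < size p) p`_j *: T j.

Lemma act_widen T p N : (size p <= N)%N -> act T p = \sum_(j < N) p`_j *: T j.
Proof.
move=> le_p_N; rewrite /act (big_ord_widen _ (fun j => p`_j *: T j) le_p_N).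
rewrite [RHS](bigID (fun j : 'I_N => (j < size p)%N)) /= [X in _ = _ + X]big1 ?addr0 //.
by move=> j; rewrite -leqNgt => /(nth_default 0) ->; rewrite scale0r.
Qed.

Lemma act_is_linear T : linear (act T).
Proof.
move=> a p q; set N := maxn (size p) (size q).
have le_pN : (size p <= N)%N by rewrite leq_maxl.
have le_qN : (size q <= N)%N by rewrite leq_maxr.
have le_apqN : (size (a *: p + q)%R <= N)%N.
  by rewrite (leq_trans (size_polyD _ _)) // geq_max (leq_trans (size_scale_leq _ _)).
rewrite (act_widen _ le_pN) (act_widen _ le_qN) (act_widen _ le_apqN) scaler_sumr -big_split.
by apply: eq_bigr => j _; rewrite coefD coefZ scalerDl scalerA.
Qed.

HB.instance Definition _ T :=
  GRing.isLinear.Build k {poly k} {poly k} *:%R (act T) (act_is_linear T).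

Lemma actXn T t : act T 'X^t = T t.
Proof.
rewrite /act size_polyXn (bigD1 (Ordinal (ltnSn t))) //= coefXn eqxx scale1r.
rewrite big1 ?addr0 // => j; rewrite -val_eqE /= coefXn => /negbTE ->.
by rewrite scale0r.
Qed.

Lemma actDl S T p : act (S + T) p = act S p + act T p.
Proof. by rewrite /act -big_split; apply: eq_bigr => j _; rewrite scalerDr. Qed.

Lemma actZl a T p : act (a *: T) p = a *: act T p.
Proof. by rewrite /act scaler_sumr; apply: eq_bigr => j _; rewrite /= !scalerA mulrC. Qed.

Lemma act_if T (b : bool) p : act T (if b then p else 0) = if b then act T p else 0.
Proof. by rewrite (fun_if (act T)) raddf0. Qed.

Definition endo_mul S T : endo := fun t => act T (S t).
Definition endo_one : endo := fun t => 'X^t.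

Lemma endo_mulA : associative endo_mul.
Proof.
move=> S T R; apply: funext => t; rewrite /endo_mul {2}/act linear_sum.
by apply: eq_bigr => j _; rewrite linearZ.
Qed.

Lemma endo_mul1 : left_id endo_one endo_mul.
Proof. by move=> T; apply: funext => t; rewrite /endo_mul actXn. Qed.

Lemma endo_mulr1 : right_id endo_one endo_mul.
Proof. by move=> T; apply: funext => t; rewrite /endo_mul /act -poly_def coefK. Qed.

Lemma endo_mulDl : left_distributive endo_mul +%R.
Proof. by move=> S T R; apply: funext => t; rewrite /endo_mul /= raddfD. Qed.

Lemma endo_mulDr : right_distributive endo_mul +%R.
Proof. by move=> S T R; apply: funext => t; rewrite /endo_mul /= actDl. Qed.

Lemma endo_one_neq0 : endo_one != 0.
Proof.
by apply/eqP => /(congr1 (fun T : endo => T 0%N)) /eqP; rewrite /endo_one /= expr0 oner_eq0.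
Qed.

HB.instance Definition _ := GRing.Zmodule_isNzRing.Build endo
  endo_mulA endo_mul1 endo_mulr1 endo_mulDl endo_mulDr endo_one_neq0.

Lemma endo_mulE S T t : (S * T) t = act T (S t). Proof. by []. Qed.

Lemma endo_scaleAl a S T : a *: (S * T) = (a *: S) * T.
Proof. by apply: funext => t; rewrite endo_scaleE !endo_mulE endo_scaleE linearZ. Qed.
HB.instance Definition _ := GRing.Lmodule_isLalgebra.Build k endo endo_scaleAl.

Lemma endo_scaleAr a S T : a *: (S * T) = S * (a *: T).
Proof. by apply: funext => t; rewrite endo_scaleE !endo_mulE actZl. Qed.
HB.instance Definition _ := GRing.Lalgebra_isAlgebra.Build k endo endo_scaleAr.

Definition vanishes_above (m : nat) T := forall t, (m < t)%N -> T t = 0.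

Lemma vanishes_above_right_ideal m : right_ideal (vanishes_above m).
Proof.
split=> [t _ //| S T hS hT t lt_mt | R T hT t lt_mt].
- by rewrite endo_addE hS // hT // addr0.
- by rewrite endo_mulE hT // raddf0.
Qed.
End EndoAlgebra.

Section QuiverWords.
Variables (k : fieldType) (n : nat) (i0 : 'I_n) (alpha gamma : 'I_n -> k).

Lemma ord_pred_eq (x i : 'I_n) : (ord_pred x == i) = (x == ordS i).
Proof. by apply/eqP/eqP => [<-|->]; rewrite ?ord_predK ?ordSK. Qed.

Definition vtx (t : nat) : 'I_n := iter t (@ord_pred n) i0.

Fixpoint upath (B : algType k) (e u : 'I_n -> B) (j : nat) : B :=
  if j is j'.+1 then u (vtx j) * upath e u j' else e i0.

Definition corner (B : algType k) (e u d : 'I_n -> B) : B :=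
  d (ord_pred i0) * u (ord_pred i0) - alpha i0 *: (u i0 * d i0) - gamma i0 *: e i0.
End QuiverWords.

Arguments vtx : simpl never.

Lemma vtx0 n (i0 : 'I_n) : vtx i0 0 = i0. Proof. by []. Qed.
Lemma vtxS n (i0 : 'I_n) t : vtx i0 t.+1 = ord_pred (vtx i0 t). Proof. exact: iterS. Qed.

Section AlgMorphism.
Variables (k : fieldType) (A B : algType k) (f : A -> B).
Hypothesis f_alg : is_alg_morphism f.

HB.instance Definition _ :=
  GRing.isLinear.Build k A B *:%R f (let: And3 f_lin _ _ := f_alg in f_lin).
HB.instance Definition _ :=
  GRing.isMonoidMorphism.Build A B f (let: And3 _ f1 fM := f_alg in (f1, fM)).

Lemma alg_morphism_right_ideal (I : B -> Prop) :
  right_ideal I -> right_ideal (fun x => I (f x)).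
Proof.
case=> I0 ID IM; split=> [|x y Ix Iy|a x Ix]; first by rewrite raddf0.
- by rewrite raddfD; apply: ID.
- by rewrite rmorphM; apply: IM.
Qed.

Variables (n : nat) (alpha gamma : 'I_n -> k) (i0 : 'I_n).
Variables (e u d : 'I_n -> A) (e' u' d' : 'I_n -> B).
Hypotheses (fe : forall i, f (e i) = e' i) (fu : forall i, f (u i) = u' i)
  (fd : forall i, f (d i) = d' i).

Lemma alg_morphism_upath_corner j :
  f (upath i0 e u j * corner i0 alpha gamma e u d)
  = upath i0 e' u' j * corner i0 alpha gamma e' u' d'.
Proof.
have f_upath : forall j, f (upath i0 e u j) = upath i0 e' u' j.
  by elim=> [|j' IHj] /=; rewrite ?rmorphM /= ?IHj ?fe ?fu.
by rewrite rmorphM /= f_upath /corner !raddfB /= !linearZ /= !rmorphM /= fe !fu !fd.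
Qed.
End AlgMorphism.

Section Representation.
Variables (k : fieldType) (n : nat) (alpha beta gamma : 'I_n -> k) (i0 : 'I_n).

Fixpoint dcoef (t : nat) : k :=
  if t is t'.+1 then
    if t' is s.+1 then
      alpha (vtx i0 t') * dcoef t' + beta (vtx i0 t') * dcoef s + gamma (vtx i0 t')
    else gamma i0 + 1
  else 0.

Arguments dcoef : simpl never.

Lemma dcoef0 : dcoef 0 = 0. Proof. by []. Qed.
Lemma dcoef1 : dcoef 1 = gamma i0 + 1. Proof. by []. Qed.
Lemma dcoefSS t :
  dcoef t.+2 =
    alpha (vtx i0 t.+1) * dcoef t.+1 + beta (vtx i0 t.+1) * dcoef t + gamma (vtx i0 t.+1).
Proof. by []. Qed.

Definition rep_e (i : 'I_n) : endo k :=
  fun t : nat => if vtx i0 t == i then 'X^t else 0 : {poly k}.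
Definition rep_u (i : 'I_n) : endo k :=
  fun t : nat => if (vtx i0 t == i) && (0 < t)%N then 'X^(t.-1) else 0 : {poly k}.
Definition rep_d (i : 'I_n) : endo k :=
  fun t : nat => if vtx i0 t.+1 == i then dcoef t.+1 *: 'X^(t.+1) else 0 : {poly k}.

Lemma rep_du i :
  rep_d i * rep_u i = fun t => if vtx i0 t == ordS i then dcoef t.+1 *: 'X^t else 0.
Proof.
apply: funext => t; rewrite endo_mulE /rep_d vtxS ord_pred_eq act_if linearZ /= actXn.
by rewrite /rep_u vtxS ord_pred_eq /=; case: (vtx i0 t == ordS i).
Qed.

Lemma rep_ud i : rep_u i * rep_d i = fun t => if vtx i0 t == i then dcoef t *: 'X^t else 0.
Proof.
apply: funext => t; rewrite endo_mulE /rep_u act_if actXn /rep_d; case: t => [|t] /=.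
  by rewrite andbF scale0r if_same.
by rewrite andbT; case: (vtx i0 t.+1 == i).
Qed.

Lemma rep_quiver : quiver_rels rep_e rep_u rep_d.
Proof.
split=> [i j|| i | i]; try split; apply: funext => t; rewrite ?endo_mulE.
- rewrite /rep_e act_if actXn /rep_e.
  case: (i =P j) => [<-|/eqP ne_ij]; first by case: (vtx i0 t == i).
  by case: (vtx i0 t =P i) => // ->; rewrite (negbTE ne_ij).
- rewrite fct_sumE (bigD1 (vtx i0 t)) //= big1 ?addr0; first by rewrite /rep_e eqxx.
  by move=> i /negbTE; rewrite /rep_e eq_sym => ->.
- by rewrite /rep_e act_if actXn /rep_u; case: (vtx i0 t == i).
- rewrite /rep_u act_if actXn /rep_e; case: t => [|t] /=; first by rewrite andbF.
  by rewrite andbT vtxS ord_pred_eq; case: (vtx i0 t == ordS i).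
- by rewrite /rep_e act_if actXn /rep_d vtxS ord_pred_eq; case: (vtx i0 t == ordS i).
- by rewrite /rep_d act_if linearZ /= actXn /rep_e; case: (vtx i0 t.+1 == i).
Qed.

Lemma rep_H_rels : H_rels alpha beta gamma rep_u rep_d.
Proof.
move=> i; split.
- rewrite -[rep_u i * _ * rep_d _]mulrA rep_du rep_ud ord_predK rep_ud.
  apply: funext => t; rewrite !endo_addE !endo_scaleE !endo_mulE.
  rewrite !act_if !linearZ /= !actXn /rep_u.
  case: (vtx i0 t =P i) => [vt|_] /=; last by rewrite !scaler0 !addr0.
  case: t vt => [|t] vt /=; first by rewrite !scaler0 !addr0.
  have -> : vtx i0 t == ordS i by rewrite -vt vtxS ord_predK.
  by rewrite dcoefSS vt !scalerA -!scalerDl.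
- rewrite -[LHS]mulrA !rep_du ord_predK rep_ud.
  apply: funext => t; rewrite !endo_addE !endo_scaleE !endo_mulE.
  rewrite !act_if !linearZ /= !actXn /rep_d vtxS !ord_pred_eq.
  case: (vtx i0 t =P ordS i) => [vt|_]; last by rewrite !scaler0 !addr0.
  rewrite dcoefSS vtxS vt ordSK !scalerA -!scalerDl; congr (_ *: _); ring.
Qed.

Lemma rep_upath j t :
  upath i0 rep_e rep_u j t = if (vtx i0 t == vtx i0 j) && (j <= t)%N then 'X^(t - j) else 0.
Proof.
elim: j t => [|j IHj] t /=; first by rewrite /rep_e vtx0 subn0 andbT.
rewrite endo_mulE /rep_u act_if actXn; case: t => [|t] /=; first by rewrite andbF.
by rewrite IHj !vtxS (inj_eq (@ord_pred_inj n)) andbT subSS; case: (vtx i0 t == vtx i0 j).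
Qed.

Hypothesis beta_i0 : beta i0 = 0.

Lemma rep_corner t : corner i0 alpha gamma rep_e rep_u rep_d t = (t == 0)%:R.
Proof.
rewrite /corner rep_du ord_predK rep_ud !endo_addE !endo_oppE !endo_scaleE /rep_e.
case: (vtx i0 t =P i0) => [vt|]; last first.
  by case: t => [|t]; rewrite ?vtx0 // => _; rewrite !scaler0 !subr0.
rewrite !scalerA -!scalerBl; case: t vt => [|t] vt /=.
  by rewrite dcoef1 dcoef0 mulr0 subr0 addrAC subrr add0r scale1r.
suff -> : dcoef t.+2 - alpha i0 * dcoef t.+1 - gamma i0 = 0 by rewrite scale0r.
by rewrite dcoefSS vt beta_i0; ring.
Qed.

Lemma rep_upath_corner j t :
  (upath i0 rep_e rep_u j * corner i0 alpha gamma rep_e rep_u rep_d) t = (t == j)%:R.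
Proof.
rewrite endo_mulE rep_upath act_if actXn rep_corner subn_eq0.
case: (t =P j) => [->|/eqP ne_tj]; first by rewrite !eqxx leqnn.
rewrite andbC; case: (leqP j t) => //= le_jt.
by rewrite leqNgt ltn_neqAle (eq_sym j) ne_tj le_jt if_same.
Qed.
End Representation.

Theorem lemma4p1 (k : closedFieldType) (hchar : [pchar k] =i pred0)
    (n : nat) (hn : (0 < n)%N) (alpha beta gamma : 'I_n -> k)
    (A : algType k) (e u d : 'I_n -> A)
    (hA : is_H_algebra alpha beta gamma e u d)
    (hbeta : exists i : 'I_n, beta i = 0) :
  ~ noetherian A.
Proof.
case: hA => _ _ _ universal; have [i0 beta_i0] := hbeta.
have [f [f_alg f_gen]] := universal _ _ _ _
  (rep_quiver alpha beta gamma i0) (rep_H_rels alpha beta gamma i0).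
have fe i : f (e i) = rep_e k i0 i by case: (f_gen i).
have fu i : f (u i) = rep_u k i0 i by case: (f_gen i).
have fd i : f (d i) = rep_d alpha beta gamma i0 i by case: (f_gen i).
have f_word j t : f (upath i0 e u j * corner i0 alpha gamma e u d) t = (t == j)%:R.
  by rewrite (alg_morphism_upath_corner f_alg alpha gamma i0 fe fu fd) rep_upath_corner.
case=> _; apply: (@not_right_noetherian_strict_chain _ (fun m z => vanishes_above m (f z))).
- by move=> m; apply: alg_morphism_right_ideal f_alg _ (vanishes_above_right_ideal _ m).
- by move=> m z fz t /ltnW; apply: fz.
- move=> m; exists (upath i0 e u m.+1 * corner i0 alpha gamma e u d); split.
    by move=> t lt_mt; rewrite f_word gtn_eqF.
  by move/(_ m.+1 (ltnSn m)); rewrite f_word eqxx; apply/eqP; rewrite oner_neq0.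
Qed.
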